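(* Let $C>0$ and $\delta>0$, let $f \in C((0,\infty);(0,\infty))$ be asymptotically increasing with $\lim_{x\to\infty} f(x)/x = \infty$, and let $\psi \in C([-\delta,0];(0,\infty))$. Suppose $f$ preserves superexponential growth, and let $z \in C([-\delta,\infty);(0,\infty))$ be a solution of \[ z'(t) = C\int_{t-\delta}^t f(z(s))\,ds, \quad t\ge 0; \qquad z(t)=\psi(t), \quad t\in[-\delta,0]. \] Then \[ \lim_{t\to\infty} \frac{F_U(z(t))}{t} = \sqrt{2C}, \] where $F_U(x) = \int_1^x \frac{du}{\sqrt{\int_0^u f(s)\,ds}}$ for $x>0$.
   Context: ''$f$ is asymptotically increasing'' means that there is a continuous increasing function $\phi:(0,\infty)\to(0,\infty)$ with $f(x)/\phi(x)\to 1$ as $x\to\infty$. A function $g \in C((0,\infty);(0,\infty))$ exhibits superexponential growth if $g(x)\to\infty$ as $x\to\infty$ and $\lim_{x\to\infty} g(x-\epsilon)/g(x) = 0$ for each $\epsilon>0$. A function $\phi \in C((0,\infty);(0,\infty))$ preserves superexponential growth if for every $g$ exhibiting superexponential growth and every $\epsilon>0$, $\lim_{x\to\infty}\phi(g(x-\epsilon))/\phi(g(x)) = 0$. *)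

From Stdlib Require Import Reals.
From Coquelicot Require Import Coquelicot.
Open Scope R_scope.

Definition pos_cont (g : R -> R) : Prop :=
  forall x, 0 < x -> continuous g x /\ 0 < g x.

Definition asymptotically_increasing (f : R -> R) : Prop :=
  exists phi : R -> R,
    pos_cont phi /\
    (forall x y, 0 < x -> x < y -> phi x < phi y) /\
    is_lim (fun x => f x / phi x) p_infty 1.

Definition superexponential (g : R -> R) : Prop :=
  pos_cont g /\ is_lim g p_infty p_infty /\
  forall eps, 0 < eps -> is_lim (fun x => g (x - eps) / g x) p_infty 0.

Definition preserves_superexp (phi : R -> R) : Prop :=
  pos_cont phi /\
  forall g, superexponential g -> forall eps, 0 < eps ->
    is_lim (fun x => phi (g (x - eps)) / phi (g x)) p_infty 0.

Definition F_U (f : R -> R) (x : R) : R :=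
  RInt (fun u => / sqrt (RInt_gen f (at_right 0) (at_point u))) 1 x.

(* For t > delta the solution is increasing and grows at least linearly; as f is
   superlinear, z eventually exceeds any multiple of its own delayed values, so z grows
   superexponentially and f (z (t - delta)) / f (z t) -> 0.  With W t = int_{t-delta}^t f(z),
   so that z' = C W and W' = f (z t) - f (z (t - delta)), and F x = int_0^x f, L'Hopital's
   rule applied to (C W^2 / 2) / F(z) gives C W^2 ~ 2 F(z), i.e. z' / sqrt (F z) -> sqrt (2C).
   That quotient is the derivative of F_U (z t), and L'Hopital once more gives the claim. *)

From Stdlib Require Import Reals Lra.
From Coquelicot Require Import Coquelicot.
Open Scope R_scope.

Lemma is_lim_p_infty_p_infty (g : R -> R) :
  is_lim g p_infty p_infty <-> forall M, exists N, forall x, N < x -> M < g x.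
Proof. rewrite <- is_lim_spec. split; intros H M; apply H. Qed.

Lemma is_lim_p_infty_finite (g : R -> R) (l : R) :
  is_lim g p_infty l <->
  forall eps, 0 < eps -> exists N, forall x, N < x -> Rabs (g x - l) < eps.
Proof.
  rewrite <- is_lim_spec. split.
  - intros H eps Heps. exact (H (mkposreal eps Heps)).
  - intros H eps. exact (H eps (cond_pos eps)).
Qed.

Lemma is_lim_p_infty_of_linear_minorant (g : R -> R) (a b m : R) :
  0 < m -> (forall x, a <= x -> b + m * (x - a) <= g x) ->
  is_lim g p_infty p_infty.
Proof.
  intros Hm Hg. apply is_lim_p_infty_p_infty. intros M.
  exists (a + Rabs (M - b) / m). intros x Hx.
  assert (Hq : 0 <= Rabs (M - b) / m) by (apply Rdiv_le_0_compat; [apply Rabs_pos | lra]).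
  assert (Hlin : Rabs (M - b) < m * (x - a)).
  { replace (Rabs (M - b)) with (m * (Rabs (M - b) / m)) by (field; lra).
    apply Rmult_lt_compat_l; lra. }
  pose proof (Rle_abs (M - b)). specialize (Hg x ltac:(lra)). lra.
Qed.

Lemma increment_ge_of_derive_ge (h dh : R -> R) (a m x y : R) :
  (forall u, a < u -> is_derive h u (dh u)) ->
  a < x -> x <= y -> (forall c, x <= c <= y -> m <= dh c) ->
  m * (y - x) <= h y - h x.
Proof.
  intros Hd Hx Hxy Hm.
  destruct (MVT_gen h x y dh) as [c [Hc ->]].
  - intros u Hu. apply Hd. rewrite Rmin_left in Hu; lra.
  - intros u Hu. apply continuity_pt_filterlim, (ex_derive_continuous (V := R_NormedModule)).
    exists (dh u). apply Hd. rewrite Rmin_left in Hu; lra.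
  - rewrite Rmin_left, Rmax_right in Hc by lra.
    apply Rmult_le_compat_r; [lra | apply Hm; lra].
Qed.

Lemma increment_near_of_derive_ratio_near (h H dh dH : R -> R) (a L e x y : R) :
  (forall u, a < u -> is_derive h u (dh u)) ->
  (forall u, a < u -> is_derive H u (dH u)) ->
  a < x -> x <= y ->
  (forall c, x <= c <= y -> 0 < dH c /\ Rabs (dh c / dH c - L) < e) ->
  Rabs (h y - h x - L * (H y - H x)) <= e * (H y - H x).
Proof.
  intros Hh HH Hx Hxy Hratio.
  assert (Hslope : forall c, x <= c <= y -> (L - e) * dH c <= dh c <= (L + e) * dH c).
  { intros c Hc. destruct (Hratio c Hc) as [HdH Hnear]. apply Rabs_def2 in Hnear.
    replace (dh c) with (dh c / dH c * dH c) by (field; lra).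
    split; apply Rmult_le_compat_r; lra. }
  assert (Hlo := increment_ge_of_derive_ge (fun u => h u - (L - e) * H u)
    (fun u => dh u - (L - e) * dH u) a 0 x y).
  assert (Hup := increment_ge_of_derive_ge (fun u => (L + e) * H u - h u)
    (fun u => (L + e) * dH u - dh u) a 0 x y).
  simpl in Hlo, Hup. apply Rabs_le. split.
  - enough (0 * (y - x) <= h y - (L - e) * H y - (h x - (L - e) * H x)) by lra.
    apply Hlo; [| lra | lra |].
    + intros u Hu. exact (is_derive_minus _ _ u _ _ (Hh u Hu) (is_derive_scal _ _ _ _ (HH u Hu))).
    + intros c Hc. pose proof (Hslope c Hc). lra.
  - enough (0 * (y - x) <= (L + e) * H y - h y - ((L + e) * H x - h x)) by lra.
    apply Hup; [| lra | lra |].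
    + intros u Hu. exact (is_derive_minus _ _ u _ _ (is_derive_scal _ _ _ _ (HH u Hu)) (Hh u Hu)).
    + intros c Hc. pose proof (Hslope c Hc). lra.
Qed.

Lemma lhopital_p_infty (h H dh dH : R -> R) (a L : R) :
  (forall x, a < x -> is_derive h x (dh x)) ->
  (forall x, a < x -> is_derive H x (dH x)) ->
  (forall x, a < x -> 0 < dH x) ->
  is_lim H p_infty p_infty ->
  is_lim (fun x => dh x / dH x) p_infty L ->
  is_lim (fun x => h x / H x) p_infty L.
Proof.
  intros Hh HH HdH HHlim Hratio. apply is_lim_p_infty_finite. intros eps Heps.
  destruct (proj1 (is_lim_p_infty_finite _ _) Hratio (eps / 2)) as [T HT]; [lra |].
  set (x0 := Rmax a T + 1).
  assert (Hx0 : a < x0 /\ T < x0).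
  { unfold x0. pose proof (Rmax_l a T). pose proof (Rmax_r a T). lra. }
  set (K := Rabs (h x0 - L * H x0) + eps / 2 * Rabs (H x0)).
  assert (HK : 0 <= K).
  { unfold K. pose proof (Rabs_pos (h x0 - L * H x0)). pose proof (Rabs_pos (H x0)). nra. }
  destruct (proj1 (is_lim_p_infty_p_infty H) HHlim (2 * K / eps)) as [N HN].
  exists (Rmax N x0). intros y Hy.
  pose proof (Rmax_l N x0). pose proof (Rmax_r N x0).
  specialize (HN y ltac:(lra)).
  assert (Hinc := increment_near_of_derive_ratio_near h H dh dH a L (eps / 2) x0 y Hh HH).
  specialize (Hinc ltac:(lra) ltac:(lra)).
  specialize (Hinc (fun c Hc => conj (HdH c ltac:(lra)) (HT c ltac:(lra)))).
  assert (HKy : K < eps / 2 * H y).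
  { replace K with (eps / 2 * (2 * K / eps)) by (field; lra).
    apply Rmult_lt_compat_l; lra. }
  assert (HHy : 0 < H y) by (assert (0 <= 2 * K / eps) by (apply Rdiv_le_0_compat; lra); lra).
  assert (Hnum : Rabs (h y - L * H y) < eps * H y).
  { replace (h y - L * H y) with ((h y - h x0 - L * (H y - H x0)) + (h x0 - L * H x0)) by ring.
    eapply Rle_lt_trans; [apply Rabs_triang |].
    pose proof (Rle_abs (- H x0)). rewrite Rabs_Ropp in *. unfold K in HKy. nra. }
  replace (h y / H y - L) with ((h y - L * H y) / H y) by (field; lra).
  rewrite Rabs_div, (Rabs_pos_eq (H y)) by lra.
  apply Rlt_div_l; lra.
Qed.

Lemma is_lim_div_id_of_derive (P dP : R -> R) (a L : R) :
  (forall x, a < x -> is_derive P x (dP x)) -> is_lim dP p_infty L ->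
  is_lim (fun x => P x / x) p_infty L.
Proof.
  intros HP HdP. apply (lhopital_p_infty P (fun x => x) dP (fun _ => 1) a L); auto.
  - intros x _. exact (is_derive_id (K := R_AbsRing) x).
  - intros x _. lra.
  - apply is_lim_id.
  - apply (is_lim_ext dP); [intros x; rewrite Rdiv_1_r |]; auto.
Qed.

Lemma RInt_ge_const (k : R -> R) (a b m : R) :
  a <= b -> ex_RInt k a b -> (forall x, a < x < b -> m <= k x) ->
  m * (b - a) <= RInt k a b.
Proof.
  intros Hab Hk Hm.
  replace (m * (b - a)) with (RInt (fun _ => m) a b) by (rewrite RInt_const; apply Rmult_comm).
  apply RInt_le; auto. apply ex_RInt_const.
Qed.

Lemma locally_gt (a t : R) : a < t -> locally t (fun u => a < u).
Proof.
  intros Hat. exists (mkposreal _ (proj2 (Rlt_0_minus _ _) Hat)). intros u Hu.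
  change (Rabs (u - t) < t - a) in Hu. apply Rabs_def2 in Hu. lra.
Qed.

Section PositiveHalfLine.

Variable k : R -> R.
Hypothesis k_cont : forall x, 0 < x -> continuous k x.

Lemma ex_RInt_pos_half_line (a b : R) : 0 < a -> 0 < b -> ex_RInt k a b.
Proof.
  intros Ha Hb. apply (ex_RInt_continuous (V := R_CompleteNormedModule)).
  intros u [Hu _]. apply k_cont.
  destruct (Rle_dec a b); [rewrite Rmin_left in Hu | rewrite Rmin_right in Hu]; lra.
Qed.

Lemma is_derive_RInt_from_1 (t : R) : 0 < t -> is_derive (fun t => RInt k 1 t) t (k t).
Proof.
  intros Ht. apply (is_derive_RInt k _ 1); [| auto].
  apply (filter_imp (fun u => 0 < u)); [| now apply locally_gt].
  intros u Hu. apply (RInt_correct (V := R_CompleteNormedModule)).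
  apply ex_RInt_pos_half_line; lra.
Qed.

Lemma is_derive_RInt_window (d t : R) : 0 < d -> d < t ->
  is_derive (fun t => RInt k (t - d) t) t (k t - k (t - d)).
Proof.
  intros Hd Htd.
  apply (is_derive_ext_loc (fun t => RInt k 1 t - RInt k 1 (t - d))).
  - apply (filter_imp (fun u => d < u)); [| apply locally_gt; lra].
    intros u Hu. rewrite <- (RInt_Chasles k 1 (u - d) u) by (apply ex_RInt_pos_half_line; lra).
    unfold plus; simpl; ring.
  - apply (is_derive_minus _ _ t (k t) (k (t - d))); [apply is_derive_RInt_from_1; lra |].
    assert (Hshift := is_derive_comp (fun t => RInt k 1 t) (fun t => t - d) t _ 1
      (is_derive_RInt_from_1 (t - d) ltac:(lra))).
    rewrite <- (Rmult_1_l (k (t - d))). apply Hshift. auto_derive; [exact I | ring].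
Qed.

End PositiveHalfLine.

Lemma superlinear_ge (f : R -> R) :
  is_lim (fun x => f x / x) p_infty p_infty ->
  forall K, exists X, 0 < X /\ forall x, X <= x -> K * x <= f x.
Proof.
  intros Hf K. destruct (proj1 (is_lim_p_infty_p_infty _) Hf K) as [N HN].
  exists (Rmax N 0 + 1). pose proof (Rmax_l N 0). pose proof (Rmax_r N 0).
  split; [lra |]. intros x Hx. specialize (HN x ltac:(lra)).
  apply Rlt_div_r in HN; lra.
Qed.

Lemma superlinear_bounded_below (f : R -> R) :
  pos_cont f -> is_lim (fun x => f x / x) p_infty p_infty ->
  forall a, 0 < a -> exists m, 0 < m /\ forall x, a <= x -> m <= f x.
Proof.
  intros Hf Hlin a Ha. destruct (superlinear_ge f Hlin 1) as [X [HX HXf]].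
  destruct (continuity_ab_min f a (Rmax X a)) as [xm [Hxm Hxm_in]].
  - apply Rmax_r.
  - intros c Hc. apply continuity_pt_filterlim, Hf. lra.
  - assert (0 < f xm) by (apply Hf; lra).
    exists (Rmin (f xm) a). split; [now apply Rmin_pos |].
    intros x Hx. pose proof (Rmin_l (f xm) a). pose proof (Rmin_r (f xm) a).
    pose proof (Rmax_l X a). pose proof (Rmax_r X a).
    destruct (Rle_dec x (Rmax X a)).
    + pose proof (Hxm x ltac:(lra)). lra.
    + pose proof (HXf x ltac:(lra)). lra.
Qed.

Definition RInt_from_0 (f : R -> R) (x : R) : R := RInt_gen f (at_right 0) (at_point x).

Section AreaFunction.

Variable f : R -> R.
Hypothesis f_pos_cont : pos_cont f.
Hypothesis f_int_0 : ex_RInt_gen f (at_right 0) (at_point 1).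

Let f_cont x : 0 < x -> continuous f x.
Proof. intros Hx. apply f_pos_cont, Hx. Qed.

Lemma ex_RInt_from_0 (x : R) : 0 < x -> ex_RInt_gen f (at_right 0) (at_point x).
Proof.
  intros Hx. apply (ex_RInt_gen_Chasles f 1 f_int_0), (proj2 (ex_RInt_gen_at_point f 1 x)).
  apply ex_RInt_pos_half_line; auto; lra.
Qed.

Lemma RInt_from_0_Chasles (x : R) : 0 < x -> RInt_from_0 f x = RInt_from_0 f 1 + RInt f 1 x.
Proof.
  intros Hx. assert (Hint : ex_RInt f 1 x) by (apply ex_RInt_pos_half_line; auto; lra).
  unfold RInt_from_0. rewrite <- (RInt_gen_at_point f 1 x Hint).
  symmetry. apply (RInt_gen_Chasles f 1 f_int_0), (proj2 (ex_RInt_gen_at_point f 1 x) Hint).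
Qed.

Lemma RInt_from_0_ge_0 (x : R) : 0 < x -> 0 <= RInt_from_0 f x.
Proof.
  intros Hx. set (F := RInt_from_0 f x).
  assert (HF : is_RInt_gen f (at_right 0) (at_point x) F).
  { apply (RInt_gen_correct (V := R_CompleteNormedModule)), ex_RInt_from_0, Hx. }
  assert (Hwin : filter_prod (at_right 0) (at_point x) (fun ab => fst ab <= snd ab /\
    forall u, fst ab <= u <= snd ab -> norm (f u) <= f u)).
  { apply (Filter_prod _ _ _ (fun u => 0 < u < x) (fun v => v = x)); [| reflexivity |].
    - exists (mkposreal x Hx). intros u Hu Hu0.
      change (Rabs (u - 0) < x) in Hu. apply Rabs_def2 in Hu. lra.
    - intros a b Ha ->. split; [simpl; lra |]. intros u Hu.
      simpl in Hu. assert (0 < f u) by (apply f_pos_cont; lra).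
      apply Req_le, Rabs_pos_eq. lra. }
  (* [f] dominates its own norm on [(0, x)], so [RInt_gen_norm] gives [|F| <= F]. *)
  assert (Habs := RInt_gen_norm f f F F (filter_imp _ _ (fun _ H => proj1 H) Hwin)
    (filter_imp _ _ (fun _ H => proj2 H) Hwin) HF HF).
  pose proof (Rle_abs (- F)). rewrite Rabs_Ropp in *. change (Rabs F <= F) in Habs. lra.
Qed.

Lemma RInt_from_0_gt_0 (x : R) : 0 < x -> 0 < RInt_from_0 f x.
Proof.
  intros Hx.
  assert (Hhalf : RInt_from_0 f x = RInt_from_0 f (x / 2) + RInt f (x / 2) x).
  { rewrite (RInt_from_0_Chasles x), (RInt_from_0_Chasles (x / 2)) by lra.
    rewrite <- (RInt_Chasles f 1 (x / 2) x) by (apply ex_RInt_pos_half_line; auto; lra).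
    unfold plus; simpl; ring. }
  assert (Hpos : 0 < RInt f (x / 2) x).
  { apply RInt_gt_0; [lra | intros u Hu; apply f_pos_cont; lra | intros u Hu; apply f_cont; lra]. }
  pose proof (RInt_from_0_ge_0 (x / 2) ltac:(lra)). lra.
Qed.

Lemma is_derive_RInt_from_0 (x : R) : 0 < x -> is_derive (RInt_from_0 f) x (f x).
Proof.
  intros Hx. apply (is_derive_ext_loc (fun y => RInt_from_0 f 1 + RInt f 1 y)).
  - apply (filter_imp (fun u => 0 < u)); [| now apply locally_gt].
    intros u Hu. symmetry. now apply RInt_from_0_Chasles.
  - rewrite <- (Rplus_0_l (f x)).
    exact (is_derive_plus _ _ x _ _ (is_derive_const (K := R_AbsRing) _ x)
      (is_derive_RInt_from_1 f f_cont x Hx)).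
Qed.

Lemma is_derive_F_U (x : R) : 0 < x -> is_derive (F_U f) x (/ sqrt (RInt_from_0 f x)).
Proof.
  intros Hx. apply (is_derive_RInt_from_1 (fun u => / sqrt (RInt_from_0 f u))); [| exact Hx].
  intros u Hu. apply continuous_Rinv_comp.
  - apply continuous_sqrt_comp, (ex_derive_continuous (V := R_NormedModule)).
    exists (f u). now apply is_derive_RInt_from_0.
  - apply Rgt_not_eq, sqrt_lt_R0, RInt_from_0_gt_0, Hu.
Qed.

Hypothesis f_superlinear : is_lim (fun x => f x / x) p_infty p_infty.

Lemma is_lim_RInt_from_0 : is_lim (RInt_from_0 f) p_infty p_infty.
Proof.
  destruct (superlinear_bounded_below f f_pos_cont f_superlinear 1 Rlt_0_1) as [m [Hm Hmf]].
  apply (is_lim_p_infty_of_linear_minorant _ 1 0 m Hm). intros x Hx.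
  rewrite RInt_from_0_Chasles by lra.
  assert (Harea : m * (x - 1) <= RInt f 1 x).
  { apply RInt_ge_const; [lra | apply ex_RInt_pos_half_line; auto; lra |].
    intros u Hu. apply Hmf. lra. }
  pose proof (RInt_from_0_gt_0 1 Rlt_0_1). lra.
Qed.

End AreaFunction.

Section DelayEquation.

Variables (C delta : R) (f z : R -> R).
Hypothesis C_pos : 0 < C.
Hypothesis delta_pos : 0 < delta.
Hypothesis f_pos_cont : pos_cont f.
Hypothesis f_superlinear : is_lim (fun x => f x / x) p_infty p_infty.
Hypothesis z_pos : forall t, 0 < t -> 0 < z t.
Hypothesis z_derive : forall t, 0 < t ->
  is_derive z t (C * RInt (fun s => f (z s)) (t - delta) t).

Let fz (s : R) : R := f (z s).

Lemma fz_continuous (t : R) : 0 < t -> continuous fz t.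
Proof.
  intros Ht. unfold fz. apply continuous_comp; [| apply f_pos_cont, z_pos, Ht].
  apply (ex_derive_continuous (V := R_NormedModule)). eexists. now apply z_derive.
Qed.

Let ex_RInt_fz (a b : R) : 0 < a -> 0 < b -> ex_RInt fz a b.
Proof. exact (ex_RInt_pos_half_line fz fz_continuous a b). Qed.

Lemma window_integral_gt_0 (t : R) : delta < t -> 0 < RInt fz (t - delta) t.
Proof.
  intros Ht. apply RInt_gt_0; [lra | |].
  - intros s Hs. apply f_pos_cont, z_pos. lra.
  - intros s Hs. apply fz_continuous. lra.
Qed.

Lemma z_nondecreasing (x y : R) : delta < x -> x <= y -> z x <= z y.
Proof.
  intros Hx Hxy.
  enough (0 * (y - x) <= z y - z x) by lra.
  apply (increment_ge_of_derive_ge z (fun t => C * RInt fz (t - delta) t) delta); auto.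
  - intros u Hu. apply z_derive. lra.
  - intros c Hc. pose proof (window_integral_gt_0 c ltac:(lra)). nra.
Qed.

Lemma is_lim_z : is_lim z p_infty p_infty.
Proof.
  destruct (superlinear_bounded_below f f_pos_cont f_superlinear (z (2 * delta)))
    as [m [Hm Hmf]]; [apply z_pos; lra |].
  assert (Hwin : forall c, 3 * delta <= c -> m * delta <= RInt fz (c - delta) c).
  { intros c Hc. replace (m * delta) with (m * (c - (c - delta))) by ring.
    apply RInt_ge_const; [lra | apply ex_RInt_fz; lra |].
    intros s Hs. apply Hmf, z_nondecreasing; lra. }
  apply (is_lim_p_infty_of_linear_minorant z (3 * delta) (z (3 * delta)) (C * (m * delta))).
  - repeat apply Rmult_lt_0_compat; lra.
  - intros t Ht.
    enough (C * (m * delta) * (t - 3 * delta) <= z t - z (3 * delta)) by lra.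
    apply (increment_ge_of_derive_ge z (fun t => C * RInt fz (t - delta) t) delta); auto; try lra.
    + intros u Hu. apply z_derive. lra.
    + intros c Hc. apply Rmult_le_compat_l; [lra |]. apply Hwin. lra.
Qed.

(* Once [f z >= K z] on the last window, [z' >= C e K z(. - e)]; integrating over a
   further interval of length [e] gives [z(t) >= C e^2 K z(t - 2e)], and [K] is arbitrary. *)
Lemma z_eventually_dominates_delayed (e M : R) : 0 < e <= delta -> 0 < M ->
  exists T, forall t, T < t -> M * z (t - 2 * e) <= z t.
Proof.
  intros He HM. set (K := M / (C * e * e)).
  destruct (superlinear_ge f f_superlinear K) as [X [HX HXf]].
  destruct (proj1 (is_lim_p_infty_p_infty z) is_lim_z X) as [T0 HT0].
  exists (Rmax T0 delta + 2 * e). intros t Ht.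
  pose proof (Rmax_l T0 delta). pose proof (Rmax_r T0 delta).
  assert (Hz2e : 0 < z (t - 2 * e)) by (apply z_pos; lra).
  assert (Hderiv : forall c, t - e <= c <= t ->
    C * (e * (K * z (t - 2 * e))) <= C * RInt fz (c - delta) c).
  { intros c Hc. apply Rmult_le_compat_l; [lra |].
    rewrite <- (RInt_Chasles fz (c - delta) (c - e) c) by (apply ex_RInt_fz; lra).
    assert (Htail : e * (K * z (t - 2 * e)) <= RInt fz (c - e) c).
    { replace e with (c - (c - e)) at 1 by ring. rewrite Rmult_comm.
      apply RInt_ge_const; [lra | apply ex_RInt_fz; lra |].
      intros s Hs. assert (Hzs : z (t - 2 * e) <= z s) by (apply z_nondecreasing; lra).
      pose proof (HXf (z s) (Rlt_le _ _ (HT0 s ltac:(lra)))).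
      unfold K in *. apply Rle_trans with (K * z s); [| assumption].
      apply Rmult_le_compat_l; [| assumption].
      apply Rdiv_le_0_compat; [lra | repeat apply Rmult_lt_0_compat; lra]. }
    assert (Hhead : 0 <= RInt fz (c - delta) (c - e)).
    { apply RInt_ge_0; [lra | apply ex_RInt_fz; lra |].
      intros s Hs. apply Rlt_le, f_pos_cont, z_pos. lra. }
    unfold plus; simpl. lra. }
  assert (Hinc := increment_ge_of_derive_ge z (fun t => C * RInt fz (t - delta) t) 0
    (C * (e * (K * z (t - 2 * e)))) (t - e) t).
  assert (Hpos : 0 < z (t - e)) by (apply z_pos; lra).
  replace (M * z (t - 2 * e)) with (C * (e * (K * z (t - 2 * e))) * (t - (t - e))).
  - enough (C * (e * (K * z (t - 2 * e))) * (t - (t - e)) <= z t - z (t - e)) by lra.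
    apply Hinc; [intros u Hu; apply z_derive; lra | lra | lra | exact Hderiv].
  - unfold K. field. lra.
Qed.

Lemma z_superexponential : superexponential z.
Proof.
  split; [| split].
  - intros t Ht. split; [| now apply z_pos].
    apply (ex_derive_continuous (V := R_NormedModule)). eexists. now apply z_derive.
  - exact is_lim_z.
  - intros ep Hep. apply is_lim_p_infty_finite. intros eps Heps.
    set (e := Rmin (ep / 2) delta).
    assert (He : 0 < e <= delta) by (split; [apply Rmin_pos | apply Rmin_r]; lra).
    assert (He2 : 2 * e <= ep) by (pose proof (Rmin_l (ep / 2) delta); unfold e; lra).
    destruct (z_eventually_dominates_delayed e (2 / eps) He) as [T HT].
    { apply Rdiv_lt_0_compat; lra. }
    exists (Rmax T (ep + delta)). intros x Hx.
    pose proof (Rmax_l T (ep + delta)). pose proof (Rmax_r T (ep + delta)).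
    specialize (HT x ltac:(lra)).
    assert (Hmono : z (x - ep) <= z (x - 2 * e)) by (apply z_nondecreasing; lra).
    assert (Hzx : 0 < z x) by (apply z_pos; lra).
    assert (Hzep : 0 < z (x - ep)) by (apply z_pos; lra).
    rewrite Rminus_0_r, Rabs_pos_eq by (apply Rlt_le, Rdiv_lt_0_compat; lra).
    apply Rlt_div_l; [lra |].
    assert (Hbound : z (x - 2 * e) <= eps / 2 * z x).
    { replace (z (x - 2 * e)) with (eps / 2 * (2 / eps * z (x - 2 * e))) by (field; lra).
      apply Rmult_le_compat_l; lra. }
    lra.
Qed.

Hypothesis f_preserves : preserves_superexp f.
Hypothesis f_int_0 : ex_RInt_gen f (at_right 0) (at_point 1).

Let W (t : R) : R := RInt fz (t - delta) t.

Lemma is_derive_window_integral (t : R) : delta < t -> is_derive W t (fz t - fz (t - delta)).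
Proof. intros Ht. now apply is_derive_RInt_window; [exact fz_continuous | |]. Qed.

Lemma is_lim_window_sq_over_area :
  is_lim (fun t => C / 2 * (W t)² / RInt_from_0 f (z t)) p_infty 1.
Proof.
  apply (lhopital_p_infty _ _ (fun t => C * W t * (fz t - fz (t - delta)))
    (fun t => C * W t * fz t) delta).
  - intros t Ht.
    assert (Hsq := is_derive_mult W W t _ _ (is_derive_window_integral t Ht)
      (is_derive_window_integral t Ht) Rmult_comm).
    apply (is_derive_scal _ _ (C / 2)) in Hsq.
    replace (C * W t * (fz t - fz (t - delta))) with
      (C / 2 * plus (mult (fz t - fz (t - delta)) (W t)) (mult (W t) (fz t - fz (t - delta)))).
    + exact Hsq.
    + unfold plus, mult; simpl; field.
  - intros t Ht.
    exact (is_derive_comp _ z t _ _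
      (is_derive_RInt_from_0 f f_pos_cont f_int_0 (z t) (z_pos t ltac:(lra)))
      (z_derive t ltac:(lra))).
  - intros t Ht. apply Rmult_lt_0_compat; [| apply f_pos_cont, z_pos; lra].
    apply Rmult_lt_0_compat; [lra | now apply window_integral_gt_0].
  - apply (is_lim_comp (RInt_from_0 f) z p_infty p_infty p_infty).
    + exact (is_lim_RInt_from_0 f f_pos_cont f_int_0 f_superlinear).
    + exact is_lim_z.
    + exists 0. intros t _. discriminate.
  - apply (is_lim_ext_loc (fun t => 1 - fz (t - delta) / fz t)).
    + exists delta. intros t Ht.
      assert (0 < fz t) by (apply f_pos_cont, z_pos; lra).
      pose proof (window_integral_gt_0 t Ht). fold (W t) in *.
      field. repeat split; lra.
    + replace (Finite 1) with (Finite (1 - 0)) by (f_equal; ring).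
      apply is_lim_minus'; [apply is_lim_const |].
      exact (proj2 f_preserves z z_superexponential delta delta_pos).
Qed.

Lemma is_lim_derive_F_U_z :
  is_lim (fun t => C * W t * / sqrt (RInt_from_0 f (z t))) p_infty (sqrt (2 * C)).
Proof.
  apply (is_lim_ext_loc (fun t => sqrt (2 * C * (C / 2 * (W t)² / RInt_from_0 f (z t))))).
  - exists delta. intros t Ht.
    pose proof (window_integral_gt_0 t Ht). fold (W t) in *.
    assert (HF : 0 < RInt_from_0 f (z t)) by (apply RInt_from_0_gt_0, z_pos; auto; lra).
    replace (2 * C * (C / 2 * (W t)² / RInt_from_0 f (z t)))
      with ((C * W t)² / RInt_from_0 f (z t)) by (unfold Rsqr; field; lra).
    rewrite sqrt_div, sqrt_Rsqr by (try apply Rle_0_sqr; nra). reflexivity.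
  - assert (Hlim := is_lim_scal_l _ (2 * C) _ _ is_lim_window_sq_over_area).
    simpl in Hlim. rewrite Rmult_1_r in Hlim.
    eapply filterlim_comp; [exact Hlim | apply continuous_sqrt].
Qed.

End DelayEquation.

Theorem lemma6p5 (C delta : R) (f psi z : R -> R) :
  0 < C -> 0 < delta ->
  pos_cont f ->
  asymptotically_increasing f ->
  is_lim (fun x => f x / x) p_infty p_infty ->
  (* the integral ∫_0^u f in F_U is well defined (convergent at 0) *)
  ex_RInt_gen f (at_right 0) (at_point 1) ->
  (* ψ ∈ C([-δ,0];(0,∞)) *)
  continuous_on (fun s => -delta <= s <= 0) psi ->
  (forall t, -delta <= t <= 0 -> 0 < psi t) ->
  preserves_superexp f ->
  (* z ∈ C([-δ,∞);(0,∞)) *)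
  (forall t, -delta <= t ->
     filterlim z (within (fun s => -delta <= s) (locally t)) (locally (z t)) /\
     0 < z t) ->
  (* z(t) = ψ(t) on [-δ,0] *)
  (forall t, -delta <= t <= 0 -> z t = psi t) ->
  (* z'(t) = C ∫_{t-δ}^t f(z(s)) ds for t > 0 ... *)
  (forall t, 0 < t ->
     is_derive z t (C * RInt (fun s => f (z s)) (t - delta) t)) ->
  (* ... and as a right derivative at t = 0 *)
  filterlim (fun h => (z h - z 0) / h) (at_right 0)
    (locally (C * RInt (fun s => f (z s)) (- delta) 0)) ->
  is_lim (fun t => F_U f (z t) / t) p_infty (sqrt (2 * C)).
Proof.
  intros HC Hdelta Hf _ Hsuperlin Hint0 _ _ Hpres Hz _ Hzd _.
  assert (Hzpos : forall t, 0 < t -> 0 < z t) by (intros t Ht; apply Hz; lra).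
  apply (is_lim_div_id_of_derive _
    (fun t => C * RInt (fun s => f (z s)) (t - delta) t * / sqrt (RInt_from_0 f (z t))) 0).
  - intros t Ht.
    exact (is_derive_comp (F_U f) z t _ _ (is_derive_F_U f Hf Hint0 (z t) (Hzpos t Ht)) (Hzd t Ht)).
  - exact (is_lim_derive_F_U_z C delta f z HC Hdelta Hf Hsuperlin Hzpos Hzd Hpres Hint0).
Qed.
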